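(* Let $k,\lambda,j$ be integers with $k>\lambda>j>1$. If an infinite word avoids $(k,\lambda)$-anti-powers (i.e. has no factor that is a $(k,\lambda)$-anti-power), then it avoids $(k-j,\lambda-j)$-anti-powers.
   Context: A factor is a contiguous subword. A $(k,\lambda)$-anti-power is a word $w=w_1\cdots w_k$ with $|w_1|=\cdots=|w_k|$ (nonempty blocks) such that $|\{i: w_i=w_j\}|\le\lambda$ for each $j\in\{1,\dots,k\}$. *)

From mathcomp Require Import all_boot.
Set Implicit Arguments. Unset Strict Implicit. Unset Printing Implicit Defensive.

Definition ap_block (A : Type) (m t : nat) (u : seq A) : seq A :=
  take m (drop (t * m) u).

Definition anti_power (A : eqType) (k lam : nat) (u : seq A) : Prop :=
  exists m, 0 < m /\ size u = k * m /\
    forall j, j < k ->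
      count (fun t => ap_block m t u == ap_block m j u) (iota 0 k) <= lam.

Definition factor_of (A : Type) (w : nat -> A) (u : seq A) : Prop :=
  exists i, u = mkseq (fun r => w (i + r)) (size u).

Definition avoids_anti_powers (A : eqType) (k lam : nat) (w : nat -> A) : Prop :=
  forall u, factor_of w u -> ~ anti_power k lam u.

From mathcomp Require Import all_boot.
Set Implicit Arguments. Unset Strict Implicit. Unset Printing Implicit Defensive.

(* Extend a (k-j, lam-j)-anti-power factor u of w, with blocks of length m,
   by the next j*m letters of w: this is a factor with k blocks of length m.
   An old block occurs at most lam-j times among the old blocks and at most j
   times among the j new ones; a new block that is not an old one occurs only
   among the new blocks.  So the extension is a (k, lam)-anti-power, which
   needs only j <= lam and j <= k. *)

Definition ap_blocks (A : Type) (m k : nat) (u : seq A) : seq (seq A) :=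
  [seq ap_block m t u | t <- iota 0 k].

Lemma anti_powerE (A : eqType) (k lam : nat) (u : seq A) :
  anti_power k lam u <->
  exists2 m, 0 < m /\ size u = k * m &
    {in ap_blocks m k u, forall x, count_mem x (ap_blocks m k u) <= lam}.
Proof.
have countE m t : count_mem (ap_block m t u) (ap_blocks m k u) =
    count (fun s => ap_block m s u == ap_block m t u) (iota 0 k).
  by rewrite count_map.
split=> [[m [m0 [su cu]]] | [m [m0 su] cu]]; exists m => //.
  by move=> x /mapP[t]; rewrite mem_iota => /andP[_ tk] ->; rewrite countE cu.
do 2!split=> //; move=> t tk; rewrite -countE cu //.
by apply: map_f; rewrite mem_iota.
Qed.

Lemma ap_block_catl (A : Type) (m t : nat) (u v : seq A) :
  t.+1 * m <= size u -> ap_block m t (u ++ v) = ap_block m t u.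
Proof. by rewrite mulSn => tu; rewrite /ap_block !take_drop takel_cat. Qed.

Lemma ap_block_catr (A : Type) (m n t : nat) (u v : seq A) :
  size u = n * m -> ap_block m (n + t) (u ++ v) = ap_block m t v.
Proof.
by move=> su; rewrite /ap_block mulnDl addnC -drop_drop drop_size_cat.
Qed.

Lemma ap_blocks_cat (A : Type) (m n l : nat) (u v : seq A) :
  size u = n * m ->
  ap_blocks m (n + l) (u ++ v) = ap_blocks m n u ++ ap_blocks m l v.
Proof.
move=> su; rewrite /ap_blocks iotaD map_cat add0n; congr (_ ++ _).
  apply/eq_in_map => t; rewrite mem_iota => /andP[_ tn].
  by rewrite ap_block_catl // su leq_mul2r tn orbT.
rewrite -[n]addn0 iotaDl -map_comp.
by apply: eq_map => t /=; rewrite ap_block_catr.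
Qed.

Lemma size_ap_blocks (A : Type) (m k : nat) (u : seq A) : size (ap_blocks m k u) = k.
Proof. by rewrite size_map size_iota. Qed.

Lemma count_mem_cat_le (T : eqType) (s s' : seq T) (lam : nat) :
  size s' <= lam -> {in s, forall x, count_mem x s <= lam - size s'} ->
  {in s ++ s', forall x, count_mem x (s ++ s') <= lam}.
Proof.
move=> s'lam cs x _; rewrite count_cat.
have cs' := count_size (pred1 x) s'.
case: (boolP (x \in s)) => [/cs xs | /count_memPn ->].
  by rewrite -(subnK s'lam) leq_add.
exact: leq_trans cs' s'lam.
Qed.

Lemma factor_of_catr (A : Type) (w : nat -> A) (u : seq A) (l : nat) :
  factor_of w u -> exists2 v, size v = l & factor_of w (u ++ v).
Proof.
move=> [i ->]; set n := size _.
exists (mkseq (fun r => w (i + n + r)) l); first exact: size_mkseq.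
exists i; rewrite size_cat !size_mkseq /mkseq iotaD map_cat add0n.
rewrite -[n]addn0 iotaDl -map_comp addn0; congr (_ ++ _).
by apply: eq_map => r /=; rewrite addnA.
Qed.

Lemma avoids_anti_powers_sub (A : eqType) (k lam j : nat) (w : nat -> A) :
  j <= k -> j <= lam ->
  avoids_anti_powers k lam w -> avoids_anti_powers (k - j) (lam - j) w.
Proof.
move=> jk jlam avoid u fu /anti_powerE[m [m0 su] cu].
have [v sv fuv] := factor_of_catr (j * m) fu.
have kE : k = k - j + j by rewrite subnK.
apply: (avoid _ fuv); apply/anti_powerE; exists m.
  by rewrite size_cat su sv -mulnDl -kE.
rewrite kE ap_blocks_cat //.
by apply: count_mem_cat_le; rewrite size_ap_blocks.
Qed.

Theorem lemma4p1 (A : eqType) (k lam j : nat) (w : nat -> A) :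
  lam < k -> j < lam -> 1 < j ->
  avoids_anti_powers k lam w -> avoids_anti_powers (k - j) (lam - j) w.
Proof.
move=> lamk jlam _; apply: avoids_anti_powers_sub; last exact: ltnW.
exact: ltnW (ltn_trans jlam lamk).
Qed.
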